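(* For all integers $n,k,i\ge 0$, \[ e_{n,i}^k = \sum_{j=0}^{i} (-1)^j \binom{n+1}{j} (k+i+1-j)^n . \]
   Context: Convention: $0^0=1$. For a fixed integer parameter $k$, the numbers $e^k_{n,i}$ are defined by $e^k_{0,0}=1$, $e^k_{n,i}=0$ whenever $i<0$ or $i>n$, and $e^k_{n,i}=(k+i+1)\,e^k_{n-1,i}+(n-k-i)\,e^k_{n-1,i-1}$ for all other integers $n,i$. *)

From mathcomp Require Import all_boot all_order all_algebra.
Set Implicit Arguments. Unset Strict Implicit. Unset Printing Implicit Defensive.
Import Order.TTheory GRing.Theory Num.Theory.
Local Open Scope ring_scope.

Fixpoint eKN (k : int) (n : nat) (i : int) : int :=
  match n with
  | 0%N => if i == 0 then 1 else 0
  | n'.+1 =>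
      if (i < 0) || (n%:Z < i) then 0
      else (k + i + 1) * eKN k n' i + (n%:Z - k - i) * eKN k n' (i - 1)
  end.

From mathcomp Require Import all_boot all_order all_algebra.
From mathcomp Require Import ring.
Import Order.TTheory GRing.Theory Num.Theory.
Local Open Scope ring_scope.

(* The alternating sum obeys the defining recurrence of e^k_{n,i}: splitting
   C(n+2, j+1) by Pascal's rule and using (j+1) C(n+1, j+1) = (n+1-j) C(n+1, j)
   matches its (j+1)-th term at (n+1, i+1) with the (j+1)-th term at (n, i+1)
   and the j-th term at (n, i).  The same recurrence shows that it vanishes for
   i > n, and both sides equal (k+1)^n at i = 0. *)

Definition eulerian_sum {R : comPzRingType} (k : R) (n i : nat) : R :=
  \sum_(0 <= j < i.+1) (-1) ^+ j * 'C(n.+1, j)%:R * (k + i%:R + 1 - j%:R) ^+ n.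

Section EulerianSum.

Variable R : comPzRingType.
Implicit Types (k x : R) (n i j : nat).

Lemma natr_mul_bin_left n j :
  j.+1%:R * 'C(n, j.+1)%:R = (n%:R - j%:R) * 'C(n, j)%:R :> R.
Proof.
have /(congr1 (GRing.natmul (1 : R))) := mul_bin_diag n.+1 j.
rewrite binS !natrM natrD /= => Hdiag.
by rewrite -[LHS](addrK (j.+1%:R * 'C(n, j)%:R)) -mulrDr -Hdiag; ring.
Qed.

Lemma eulerian_term_rec x n j :
  (-1) ^+ j.+1 * 'C(n.+2, j.+1)%:R * x ^+ n.+1
  = (x + j.+1%:R) * ((-1) ^+ j.+1 * 'C(n.+1, j.+1)%:R * x ^+ n)
    + (n.+1%:R - x - j%:R) * ((-1) ^+ j * 'C(n.+1, j)%:R * x ^+ n).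
Proof.
rewrite binS natrD !exprS.
apply/eqP; rewrite -subr_eq0; apply/eqP.
transitivity ((-1) ^+ j * x ^+ n *
  (j.+1%:R * 'C(n.+1, j.+1)%:R - (n.+1%:R - j%:R) * 'C(n.+1, j)%:R) : R).
  by ring.
by rewrite natr_mul_bin_left subrr mulr0.
Qed.

Lemma eulerian_sum0 k n : eulerian_sum k n 0 = (k + 1) ^+ n.
Proof. by rewrite /eulerian_sum big_nat1 bin0 addr0 subr0 mulr1 mul1r. Qed.

Lemma eulerian_sumSS k n i :
  eulerian_sum k n.+1 i.+1 =
  (k + i.+1%:R + 1) * eulerian_sum k n i.+1
  + (n.+1%:R - k - i.+1%:R) * eulerian_sum k n i.
Proof.
rewrite /eulerian_sum big_nat_recl // [in RHS]big_nat_recl //.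
rewrite mulrDr !big_distrr /= -[RHS]addrA -big_split /=.
congr (_ + _); first by rewrite !bin0 !expr0 exprS; ring.
apply: eq_bigr => j _.
have -> : k + i.+1%:R + 1 - j.+1%:R = k + i%:R + 1 - j%:R by ring.
rewrite eulerian_term_rec; congr (_ * _ + _ * _); ring.
Qed.

Lemma eulerian_sum_eq0 k n i : (n < i)%N -> eulerian_sum k n i = 0.
Proof.
elim: n i => [|n IHn] [|i] // lt_ni.
  rewrite /eulerian_sum !big_nat_recl // big1 => [|j _]; last first.
    by rewrite bin_small // mulr0 mul0r.
  by rewrite bin0 bin1; ring.
by rewrite eulerian_sumSS !IHn ?mulr0 ?addr0 // ltnW.
Qed.

End EulerianSum.

Lemma eKN_lt0 (k : int) n i : i < 0 -> eKN k n i = 0.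
Proof. by case: n => [|n] /= i_lt0; rewrite ?i_lt0 // lt_eqF. Qed.

Lemma eKN_eulerian_sum (k : int) n i : eKN k n i%:Z = eulerian_sum k n i.
Proof.
elim: n i => [|n IHn] i.
  case: i => [|i]; first by rewrite eulerian_sum0.
  by rewrite eulerian_sum_eq0.
rewrite /= ltz_nat.
have [lt_ni|le_in] := ltnP n.+1 i; first by rewrite eulerian_sum_eq0.
case: i le_in => [|i] _ /=.
  by rewrite [eKN _ _ (0 - 1)]eKN_lt0 // mulr0 addr0 IHn !eulerian_sum0 addr0 exprS.
have -> : i.+1%:Z - 1 = i by rewrite -addn1 PoszD addrK.
by rewrite !IHn eulerian_sumSS !natz.
Qed.

Theorem corollary2p3 (n k i : nat) :
  eKN k%:Z n i%:Z =
  \sum_(0 <= j < i.+1) (-1) ^+ j * ('C(n.+1, j))%:Z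
                         * (k%:Z + i%:Z + 1 - j%:Z) ^+ n.
Proof.
rewrite eKN_eulerian_sum /eulerian_sum.
by apply: eq_bigr => j _; rewrite !natz.
Qed.
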